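(* Let $k\geq 2$ be an integer and $g_k(x)=xf_{k-1}(x)/f_k(x)$. Then $g_k'(x)>0$ for every $x>0$.
   Context: $f_t(x)=e^{-x}\sum_{i\geq t}x^i/i!$. *)

From Stdlib Require Import Reals.
From Coquelicot Require Import Coquelicot.
Open Scope R_scope.

Definition f (t : nat) (x : R) : R :=
  exp (- x) * Series (fun i : nat => if Nat.leb t i then x ^ i / INR (Factorial.fact i) else 0).

Definition g (k : nat) (x : R) : R := x * f (k - 1) x / f k x.

(** Write [b = f_k] and [a = f_k' = e^{-x} x^{k-1}/(k-1)!]. Then [f_{k-1} = b + a] and
    [x a' = (k-1-x) a], which give [g_k' = a h / b^2] with
    [h = b^2/a + (k-x) b - x a]. A direct computation shows
    [x h' = -(b/a) h + b^2/a + b^3/a^2], so [h' > 0] wherever [h <= 0]. Together with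
    [h >= -x] near [0] this keeps [h] positive: a minimum of [h] at a point where [h < 0]
    would be a point where [h] increases. *)

From Pilot Require Import Defs.
From Stdlib Require Import Reals Lra Lia Factorial.
From Coquelicot Require Import Coquelicot.
Open Scope R_scope.

Lemma is_derive_eq (F : R -> R) x l l' : is_derive F x l -> l = l' -> is_derive F x l'.
Proof. now intros H <-. Qed.

Lemma fact_INR_pos n : 0 < INR (fact n).
Proof. apply lt_0_INR, lt_O_fact. Qed.

Lemma is_derive_pos_left_lt (h : R -> R) m d a :
  is_derive h m d -> 0 < d -> a < m -> exists w, a < w < m /\ h w < h m.
Proof.
  intros Hh Hd Ham.
  apply is_derive_Reals in Hh.
  destruct (Hh (d / 2) ltac:(lra)) as [del Hdel].
  pose proof (cond_pos del) as Hdel0.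
  set (e := Rmin (del / 2) ((m - a) / 2)).
  assert (He1 : e <= del / 2) by apply Rmin_l.
  assert (He2 : e <= (m - a) / 2) by apply Rmin_r.
  assert (He0 : 0 < e) by (apply Rmin_pos; lra).
  assert (Habs : Rabs (- e) < del) by (rewrite Rabs_Ropp, Rabs_pos_eq; lra).
  specialize (Hdel (- e) ltac:(lra) Habs).
  exists (m + - e). split; [lra|].
  set (q := (h (m + - e) - h m) / - e) in *.
  assert (Hq : 0 < q) by (apply Rabs_def2 in Hdel; lra).
  assert (Heq : h (m + - e) - h m = q * - e) by (unfold q; field; lra).
  nra.
Qed.

(* If [h y0 <= 0], then [h z < h y0] for some [z < y0]; for [x] small, [h x >= -x > h z],
   so the minimum of [h] on [[x, z]] is attained at some [mx > x] with [h mx < 0]. There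
   [h' > 0], so [h] is even smaller just left of [mx]. *)
Lemma pos_of_derive_pos_where_nonpos (h : R -> R) :
  (forall y, 0 < y -> ex_derive h y) ->
  (forall y, 0 < y -> h y <= 0 -> 0 < Derive h y) ->
  (forall y, 0 < y <= 1 -> - y <= h y) ->
  forall y, 0 < y -> 0 < h y.
Proof.
  intros Hex Hsign Hlow y0 Hy0.
  destruct (Rlt_or_le 0 (h y0)) as [|Hnonpos]; [assumption | exfalso].
  destruct (is_derive_pos_left_lt h y0 (Derive h y0) 0 (Derive_correct _ _ (Hex y0 Hy0))
              (Hsign y0 Hy0 Hnonpos) Hy0) as [z [Hz Hhz]].
  set (x := Rmin z (Rmin 1 (- h z / 2))).
  assert (Hx1 : x <= z) by apply Rmin_l.
  assert (Hx2 : x <= 1) by (eapply Rle_trans; [apply Rmin_r | apply Rmin_l]).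
  assert (Hx3 : x <= - h z / 2) by (eapply Rle_trans; [apply Rmin_r | apply Rmin_r]).
  assert (Hx0 : 0 < x) by (apply Rmin_pos; [lra | apply Rmin_pos; lra]).
  assert (Hhx : h z < h x) by (pose proof (Hlow x ltac:(lra)); lra).
  assert (Hcont : forall c, x <= c <= z -> continuity_pt h c).
  { intros c Hc. apply derivable_continuous_pt.
    exists (Derive h c). apply is_derive_Reals, Derive_correct, Hex. lra. }
  destruct (continuity_ab_min h x z Hx1 Hcont) as [mx [Hmin Hmx]].
  assert (Hmz : h mx <= h z) by (apply Hmin; lra).
  assert (Hmxx : x < mx).
  { destruct (Rle_lt_or_eq_dec x mx (proj1 Hmx)) as [|E]; [assumption | subst mx; lra]. }
  destruct (is_derive_pos_left_lt h mx (Derive h mx) x (Derive_correct _ _ (Hex mx ltac:(lra)))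
              (Hsign mx ltac:(lra) ltac:(lra)) Hmxx) as [w [Hw Hhw]].
  pose proof (Hmin w ltac:(lra)). lra.
Qed.

Fixpoint exp_taylor (t : nat) (x : R) : R :=
  match t with O => 0 | S t' => exp_taylor t' x + x ^ t' / INR (fact t') end.

Definition poisson (s : nat) (x : R) : R := exp (- x) * x ^ s / INR (fact s).

Lemma exp_taylor_succ_0 t : exp_taylor (S t) 0 = 1.
Proof.
  induction t as [|t IH]; [simpl; field|].
  change (exp_taylor (S (S t)) 0) with (exp_taylor (S t) 0 + 0 ^ S t / INR (fact (S t))).
  rewrite IH, pow_i by lia. unfold Rdiv. ring.
Qed.

Lemma sum_n_exp_taylor x t :
  sum_n (fun n => x ^ n / INR (fact n)) t = exp_taylor (S t) x.
Proof.
  induction t as [|t IH].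
  - rewrite sum_O. simpl. lra.
  - rewrite sum_Sn, IH. reflexivity.
Qed.

Lemma is_series_exp x : is_series (fun n => x ^ n / INR (fact n)) (exp x).
Proof.
  eapply is_series_ext; [| apply (is_exp_Reals x)].
  intros n. unfold scal; simpl. unfold mult; simpl. rewrite pow_n_pow. reflexivity.
Qed.

Lemma f_succ_eq s x : Defs.f (S s) x = 1 - exp (- x) * exp_taylor (S s) x.
Proof.
  set (term := fun n => x ^ n / INR (fact n)).
  set (tail := fun i => if Nat.leb (S s) i then x ^ i / INR (fact i) else 0).
  assert (Hshift : is_series (fun n => term (S s + n)%nat) (exp x - exp_taylor (S s) x)).
  { apply is_series_incr_n; [lia|]. simpl pred. unfold term. rewrite sum_n_exp_taylor.
    replace (plus _ _) with (exp x) by (unfold plus; simpl; ring).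
    apply is_series_exp. }
  assert (Hprefix : forall n, (n <= s)%nat -> tail n = 0).
  { intros n Hn. unfold tail. destruct (Nat.leb_spec (S s) n); [lia | reflexivity]. }
  assert (Htail : is_series tail (exp x - exp_taylor (S s) x)).
  { apply (is_series_decr_n tail (S s)); [lia|]. unfold plus, opp; simpl.
    rewrite (sum_n_ext_loc tail (fun _ => 0)) by exact Hprefix.
    rewrite sum_n_const, Rmult_0_r, Ropp_0, Rplus_0_r.
    eapply is_series_ext; [| exact Hshift].
    intros n. unfold tail, term. destruct (Nat.leb_spec (S s) (S (s + n))); [reflexivity | lia]. }
  unfold Defs.f. fold tail. rewrite (is_series_unique _ _ Htail).
  rewrite Rmult_minus_distr_l, <- exp_plus, Rplus_opp_l, exp_0. ring.
Qed.

Lemma f_eq_succ s x : Defs.f (S s) x = Defs.f (S (S s)) x + poisson (S s) x.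
Proof.
  rewrite !f_succ_eq. unfold poisson.
  change (exp_taylor (S (S s)) x) with (exp_taylor (S s) x + x ^ S s / INR (fact (S s))).
  pose proof (fact_INR_pos (S s)). field. lra.
Qed.

Lemma is_derive_exp_taylor t x : is_derive (exp_taylor (S t)) x (exp_taylor t x).
Proof.
  induction t as [|t IH].
  - apply (is_derive_ext (fun _ => 1)); [intros; simpl; field |].
    simpl. auto_derive; auto.
  - apply (is_derive_plus (exp_taylor (S t)) (fun y => y ^ S t / INR (fact (S t)))); [exact IH|].
    pose proof (fact_INR_pos t).
    auto_derive; [exact I|].
    change (match t with 0%nat => 1 | S _ => INR t + 1 end) with (INR (S t)).
    change (fact t + t * fact t)%nat with (S t * fact t)%nat. rewrite mult_INR.
    field. split; [lra | apply not_0_INR; lia].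
Qed.

Lemma is_derive_f_succ s x : is_derive (Defs.f (S s)) x (poisson s x).
Proof.
  apply (is_derive_ext (fun y => 1 - exp (- y) * exp_taylor (S s) y));
    [intros y; symmetry; apply f_succ_eq|].
  assert (Hexp : is_derive (fun y => exp (- y)) x (- exp (- x))) by (auto_derive; auto; ring).
  pose proof (is_derive_mult _ _ x _ _ Hexp (is_derive_exp_taylor s x)
                (fun _ _ => Rmult_comm _ _)) as Hprod.
  eapply is_derive_eq; [exact (is_derive_minus _ _ x _ _ (is_derive_const 1 x) Hprod)|].
  pose proof (fact_INR_pos s).
  unfold poisson, minus, plus, opp, mult, zero; simpl. field. lra.
Qed.

Lemma is_derive_poisson s x :
  is_derive (poisson (S s)) x (poisson s x - poisson (S s) x).
Proof.
  apply (is_derive_ext (fun y => Defs.f (S s) y - Defs.f (S (S s)) y));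
    [intros y; rewrite f_eq_succ; simpl; ring|].
  exact (is_derive_minus _ _ x _ _ (is_derive_f_succ s x) (is_derive_f_succ (S s) x)).
Qed.

Lemma poisson_pos s x : 0 < x -> 0 < poisson s x.
Proof.
  intros Hx. unfold poisson. pose proof (fact_INR_pos s).
  apply Rdiv_lt_0_compat; [apply Rmult_lt_0_compat; [apply exp_pos | apply pow_lt] | ]; lra.
Qed.

Lemma poisson_eq_succ s x : x <> 0 -> poisson s x = INR (S s) * poisson (S s) x / x.
Proof.
  intros Hx. unfold poisson. change (fact (S s)) with (S s * fact s)%nat. rewrite mult_INR.
  pose proof (fact_INR_pos s). assert (0 < INR (S s)) by (apply lt_0_INR; lia).
  simpl pow. field. repeat split; lra.
Qed.

Lemma poisson_le_1 s x : 0 < x <= 1 -> poisson s x <= 1.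
Proof.
  intros Hx. unfold poisson.
  assert (Hfact : 1 <= INR (fact s)) by (apply (le_INR 1), lt_O_fact).
  assert (He : exp (- x) <= 1) by (rewrite <- exp_0; apply Rlt_le, exp_increasing; lra).
  assert (Hp : x ^ s <= 1) by (rewrite <- (pow1 s); apply pow_incr; lra).
  pose proof (pow_lt x s (proj1 Hx)). pose proof (exp_pos (- x)).
  apply Rmult_le_reg_r with (INR (fact s)); [lra|].
  unfold Rdiv. rewrite Rmult_assoc, Rinv_l by lra. nra.
Qed.

Lemma f_succ_pos s x : 0 < x -> 0 < Defs.f (S s) x.
Proof.
  intros Hx.
  destruct (MVT_cor2 (Defs.f (S s)) (poisson s) 0 x Hx) as [c [Hc Hcx]].
  { intros c _. apply is_derive_Reals, is_derive_f_succ. }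
  assert (Hf0 : Defs.f (S s) 0 = 0)
    by (rewrite f_succ_eq, Ropp_0, exp_0, exp_taylor_succ_0; ring).
  pose proof (poisson_pos s c (proj1 Hcx)). nra.
Qed.

(* With [k = m + 2], [b = f_k] and [a = f_k' = poisson (k - 1)], this is the factor [h]
   in [g_k' = a h / b^2]. *)
Definition g_deriv_factor (m : nat) (y : R) : R :=
  Defs.f (S (S m)) y ^ 2 / poisson (S m) y
  + (INR (S (S m)) - y) * Defs.f (S (S m)) y - y * poisson (S m) y.

Lemma is_derive_g_deriv_factor m y : 0 < y ->
  is_derive (g_deriv_factor m) y
    (Defs.f (S (S m)) y
     - (poisson m y - poisson (S m) y) * Defs.f (S (S m)) y ^ 2 / poisson (S m) y ^ 2).
Proof.
  intros Hy.
  pose proof (is_derive_f_succ (S m) y) as Hb.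
  pose proof (is_derive_poisson m y) as Ha.
  pose proof (poisson_pos (S m) y Hy) as Hapos.
  assert (Hlin : is_derive (fun z => INR (S (S m)) - z) y (-1)) by (auto_derive; auto; ring).
  assert (Hid : is_derive (fun z : R => z) y 1) by (auto_derive; auto).
  pose proof (is_derive_div _ _ y _ _ (is_derive_pow _ 2 y _ Hb) Ha ltac:(lra)) as Hquot.
  pose proof (is_derive_mult _ _ y _ _ Hlin Hb (fun _ _ => Rmult_comm _ _)) as Hmid.
  pose proof (is_derive_mult _ _ y _ _ Hid Ha (fun _ _ => Rmult_comm _ _)) as Hlast.
  eapply is_derive_eq;
    [exact (is_derive_minus _ _ y _ _ (is_derive_plus _ _ y _ _ Hquot Hmid) Hlast)|].
  rewrite (poisson_eq_succ m y) by lra.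
  rewrite !S_INR. unfold minus, plus, opp, mult; simpl.
  field. lra.
Qed.

Lemma g_deriv_factor_lower m y : 0 < y <= 1 -> - y <= g_deriv_factor m y.
Proof.
  intros Hy. unfold g_deriv_factor.
  pose proof (poisson_pos (S m) y ltac:(lra)) as Ha.
  pose proof (poisson_le_1 (S m) y Hy) as Ha1.
  pose proof (f_succ_pos (S m) y ltac:(lra)) as Hb.
  assert (0 <= Defs.f (S (S m)) y ^ 2 / poisson (S m) y)
    by (apply Rlt_le, Rdiv_lt_0_compat; [apply pow_lt |]; lra).
  assert (2 <= INR (S (S m))) by (rewrite !S_INR; pose proof (pos_INR m); lra).
  nra.
Qed.

Lemma g_deriv_factor_pos m y : 0 < y -> 0 < g_deriv_factor m y.
Proof.
  apply pos_of_derive_pos_where_nonpos; [| | apply g_deriv_factor_lower].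
  - intros z Hz. eexists. exact (is_derive_g_deriv_factor m z Hz).
  - intros z Hz Hh.
    rewrite (is_derive_unique _ _ _ (is_derive_g_deriv_factor m z Hz)).
    set (a := poisson (S m) z) in *.
    set (b := Defs.f (S (S m)) z).
    set (h := g_deriv_factor m z) in Hh.
    assert (Ha : 0 < a) by apply poisson_pos, Hz.
    assert (Hb : 0 < b) by apply f_succ_pos, Hz.
    assert (Hkey : z * (b - (poisson m z - a) * b ^ 2 / a ^ 2)
                   = - (b / a) * h + b ^ 2 / a + b ^ 3 / a ^ 2).
    { unfold h, g_deriv_factor. rewrite (poisson_eq_succ m z) by lra. fold a b.
      rewrite !S_INR. field. lra. }
    assert (0 <= - (b / a) * h) by (assert (0 < b / a) by (apply Rdiv_lt_0_compat; lra); nra).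
    assert (0 < b ^ 2 / a) by (apply Rdiv_lt_0_compat; [apply pow_lt |]; lra).
    assert (0 < b ^ 3 / a ^ 2) by (apply Rdiv_lt_0_compat; apply pow_lt; lra).
    nra.
Qed.

Lemma is_derive_g m y : 0 < y ->
  is_derive (g (S (S m))) y
    (poisson (S m) y * g_deriv_factor m y / Defs.f (S (S m)) y ^ 2).
Proof.
  intros Hy.
  pose proof (poisson_pos (S m) y Hy) as Ha.
  pose proof (f_succ_pos (S m) y Hy) as Hb.
  assert (Hid : is_derive (fun z : R => z) y 1) by (auto_derive; auto).
  pose proof (is_derive_mult _ _ y _ _ Hid (is_derive_f_succ m y) (fun _ _ => Rmult_comm _ _))
    as Hnum.
  eapply is_derive_eq; [exact (is_derive_div _ _ y _ _ Hnum (is_derive_f_succ (S m) y) ltac:(lra))|].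
  unfold mult, plus; simpl.
  rewrite (f_eq_succ m y), (poisson_eq_succ m y) by lra. unfold g_deriv_factor. rewrite !S_INR.
  field. lra.
Qed.

Theorem lemma37 (k : nat) (hk : (2 <= k)%nat) :
  forall x : R, 0 < x -> exists l : R, is_derive (g k) x l /\ 0 < l.
Proof.
  intros x Hx. destruct k as [|[|m]]; [lia | lia |].
  eexists. split; [exact (is_derive_g m x Hx) |].
  apply Rdiv_lt_0_compat.
  - apply Rmult_lt_0_compat; [apply poisson_pos | apply g_deriv_factor_pos]; exact Hx.
  - apply pow_lt, f_succ_pos, Hx.
Qed.
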